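(* Let $\mathbf q=(r_1^{x_1})\in\mathbb Z_{\ge1}^{x_1}$, i.e. $\mathbf q$ consists of $x_1\ge1$ copies of a single positive integer $r_1$. If $\Delta_{(1,\mathbf q)}$ is reflexive and has the integer decomposition property, then $r_1=1$, i.e. $\mathbf q=(1,1,\dots,1)$.
   Context: For $\mathbf q=(q_1,\dots,q_n)\in\mathbb Z_{\ge1}^n$ with $q_1\le\cdots\le q_n$, let $\Delta_{(1,\mathbf q)}=\mathrm{conv}\{e_1,\dots,e_n,-\sum_{i=1}^n q_ie_i\}\subset\mathbb R^n$. A lattice polytope $P\subset\mathbb R^n$ has the integer decomposition property (IDP) if for every integer $m\ge1$, every point of $mP\cap\mathbb Z^n$ is a sum of $m$ points of $P\cap\mathbb Z^n$. A lattice polytope is reflexive if, after translation by an integer vector, the origin lies in its interior and its polar dual is also a lattice polytope; it is known that $\Delta_{(1,\mathbf q)}$ is reflexive if and only if $q_i$ divides $1+\sum_{j=1}^n q_j$ for every $i$. The notation $(r_1^{x_1})$ denotes the vector consisting of $x_1$ copies of $r_1$. *)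

From mathcomp Require Import all_boot all_order all_algebra.
Set Implicit Arguments. Unset Strict Implicit. Unset Printing Implicit Defensive.
Import Order.TTheory GRing.Theory Num.Theory.
Local Open Scope ring_scope.

(* Points of R^n are rational row vectors 'rV[rat]_n (all polytopes here are
   rational, so rational points suffice). *)

Definition is_lattice (n : nat) (x : 'rV[rat]_n) : Prop :=
  exists z : 'rV[int]_n, x = map_mx (fun a : int => a%:~R) z.

Definition in_conv (n k : nat) (V : 'I_k -> 'rV[rat]_n) (x : 'rV[rat]_n) : Prop :=
  exists l : 'I_k -> rat,
    (forall i, 0 <= l i) /\ \sum_i l i = 1 /\ x = \sum_i l i *: V i.

Definition in_dil (n k : nat) (V : 'I_k -> 'rV[rat]_n) (m : nat) (x : 'rV[rat]_n) : Prop :=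
  in_conv V ((m%:R)^-1 *: x).

Definition IDP (n k : nat) (V : 'I_k -> 'rV[rat]_n) : Prop :=
  forall m : nat, (1 <= m)%N -> forall x : 'rV[rat]_n,
    is_lattice x -> in_dil V m x ->
    exists ys : 'I_m -> 'rV[rat]_n,
      (forall j, is_lattice (ys j) /\ in_conv V (ys j)) /\ x = \sum_j ys j.

Definition dotv (n : nat) (x y : 'rV[rat]_n) : rat := \sum_i x 0 i * y 0 i.

Definition origin_interior (n k : nat) (V : 'I_k -> 'rV[rat]_n) : Prop :=
  exists e : rat, 0 < e /\
    forall y : 'rV[rat]_n, (forall i, `|y 0 i| <= e) -> in_conv V y.

Definition in_polar (n k : nat) (V : 'I_k -> 'rV[rat]_n) (y : 'rV[rat]_n) : Prop :=
  forall x, in_conv V x -> -1 <= dotv x y.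

Definition is_lattice_polytope (n : nat) (S : 'rV[rat]_n -> Prop) : Prop :=
  exists (k : nat) (W : 'I_k -> 'rV[rat]_n),
    (forall j, is_lattice (W j)) /\ forall y, S y <-> in_conv W y.

Definition reflexive_polytope (n k : nat) (V : 'I_k -> 'rV[rat]_n) : Prop :=
  exists t : 'rV[rat]_n, is_lattice t /\
    origin_interior (fun i => V i - t) /\
    is_lattice_polytope (in_polar (fun i => V i - t)).

(* vertices of Delta_(1,q) = conv{e_1,...,e_n, -sum q_i e_i}:
   index i < n gives e_i, index n gives -sum_i q_i e_i *)
Definition delta_vert (n : nat) (q : 'I_n -> nat) (i : 'I_n.+1) : 'rV[rat]_n :=
  \row_(j < n) (if (i : nat) == n then - (q j)%:R
                else if (i : nat) == (j : nat) then 1 else 0).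

From mathcomp Require Import all_boot all_order all_algebra.
From mathcomp Require Import ring lra zify.
Set Implicit Arguments. Unset Strict Implicit. Unset Printing Implicit Defensive.
Import Order.TTheory GRing.Theory Num.Theory.
Local Open Scope ring_scope.

(* Let r >= 2, t the lattice translation and U_k = V_k - t the translated
   vertices (e_1, ..., e_n and -r(1,...,1)).  The polar of conv U is cut out
   by the n + 1 inequalities <U_k, y> >= -1.  If the polar is a lattice
   polytope, then every point of the polar that is tight on a set T of these
   inequalities can be replaced by a LATTICE point of the polar tight on T
   (some vertex of the lattice polytope carrying positive weight).  With
   s = sum_j t_j we exhibit such a rational point tight on n inequalities:
   - if s < 0, the point -(1 - s)^-1 (1,...,1), tight on all e_j;
   - if s >= 0, a point tight on all inequalities but the one for e_i, where
     c_i = (1 + n r) t_i + r - r s >= 2 (such an i exists as sum_i c_i > n).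
   In both cases the tight equations for an integral point force a product
   (1 - s) * b = 1, resp. c_i * b = 1, of integers with a factor >= 2. *)

Lemma dotv_sumZl n k (l : 'I_k -> rat) (U : 'I_k -> 'rV[rat]_n) y :
  dotv (\sum_i l i *: U i) y = \sum_i l i * dotv (U i) y.
Proof.
rewrite /dotv; under eq_bigr => j _ do rewrite summxE big_distrl /=.
rewrite exchange_big /=; apply: eq_bigr => i _.
by rewrite big_distrr /=; apply: eq_bigr => j _; rewrite mxE mulrA.
Qed.

Lemma dotv_sumZr n k (l : 'I_k -> rat) (U : 'I_k -> 'rV[rat]_n) y :
  dotv y (\sum_i l i *: U i) = \sum_i l i * dotv y (U i).
Proof.
rewrite /dotv; under eq_bigr => j _ do rewrite summxE big_distrr /=.
rewrite exchange_big /=; apply: eq_bigr => i _.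
by rewrite big_distrr /=; apply: eq_bigr => j _; rewrite mxE mulrCA.
Qed.

Lemma dotvBl n (x z y : 'rV[rat]_n) : dotv (x - z) y = dotv x y - dotv z y.
Proof. by rewrite /dotv -sumrB; apply: eq_bigr => i _; rewrite !mxE mulrBl. Qed.

Lemma dotvZr n (x z : 'rV[rat]_n) a : dotv x (a *: z) = a * dotv x z.
Proof. by rewrite /dotv big_distrr; apply: eq_bigr => i _; rewrite !mxE mulrCA. Qed.

Lemma dotv_int n (x y : 'rV[rat]_n) (a b : 'I_n -> int) :
  (forall j, x 0 j = (a j)%:~R) -> (forall j, y 0 j = (b j)%:~R) ->
  dotv x y = (\sum_j a j * b j)%:~R.
Proof.
move=> ha hb; rewrite /dotv rmorph_sum; apply: eq_bigr => j _.
by rewrite ha hb rmorphM.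
Qed.

Lemma lattice_coords n (x : 'rV[rat]_n) :
  is_lattice x -> exists z : 'I_n -> int, forall j, x 0 j = (z j)%:~R.
Proof. by move=> [z ->]; exists (fun j => z 0 j) => j; rewrite mxE. Qed.

Lemma in_conv_vert n k (V : 'I_k -> 'rV[rat]_n) j : in_conv V (V j).
Proof.
exists (fun j' => (j' == j)%:R); split; first by move=> j'; case: (j' == j).
split; first by rewrite (bigD1 j) //= eqxx big1 ?addr0 // => j' /negbTE ->.
rewrite (bigD1 j) //= eqxx scale1r big1 ?addr0 // => j' /negbTE ->.
by rewrite scale0r.
Qed.

Lemma in_polar_vert n k (U : 'I_k -> 'rV[rat]_n) y :
  (forall i, -1 <= dotv (U i) y) -> in_polar U y.
Proof.
move=> H x [l [l0 [l1 ->]]]; rewrite dotv_sumZl.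
have -> : -1 = \sum_i l i * (-1) :> rat by rewrite -big_distrl /= l1 mul1r.
by apply: ler_sum => i _; apply: ler_wpM2l.
Qed.

Lemma scaled_in_polar n k (U : 'I_k -> 'rV[rat]_n) (T : pred 'I_k) a z :
  0 < a -> (forall i, -a <= dotv (U i) z) ->
  (forall i, T i -> dotv (U i) z = -a) ->
  in_polar U (a^-1 *: z) /\ forall i, T i -> dotv (U i) (a^-1 *: z) = -1.
Proof.
move=> a0 ge tight; have an0 : a != 0 by rewrite gt_eqF.
split=> [|i Ti]; last by rewrite dotvZr tight // mulrN mulVf.
apply: in_polar_vert => i; rewrite dotvZr -(mulVf an0) -mulrN.
by apply: ler_wpM2l; [rewrite invr_ge0 ltW | apply: ge].
Qed.

(* If the polar is a lattice polytope, a point of the polar tight on the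
   inequalities in T may be replaced by a lattice point tight on T: any
   vertex of the lattice polytope with positive barycentric weight works. *)
Lemma tight_lattice_point n k (U : 'I_k -> 'rV[rat]_n) (T : pred 'I_k) y :
  is_lattice_polytope (in_polar U) -> in_polar U y ->
  (forall i, T i -> dotv (U i) y = -1) ->
  exists w, is_lattice w /\ forall i, T i -> dotv (U i) w = -1.
Proof.
move=> [K [W [WL HW]]] Py Ty.
have [l [l0 [l1 ey]]] := (HW y).1 Py.
have PW j : in_polar U (W j) by apply/(HW _).2; apply: in_conv_vert.
have [j ljn|l_eq0] := pickP (fun j => l j != 0); last first.
  move: l1; rewrite big1 => [/eqP|j _]; first by rewrite eq_sym oner_eq0.
  by move: (l_eq0 j) => /negbFE/eqP.
exists (W j); split=> [|i Ti]; first exact: WL.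
have slack_ge0 j' : 0 <= l j' * (dotv (U i) (W j') + 1).
  by apply: mulr_ge0 => //; rewrite -lerBlDr sub0r; apply: PW; apply: in_conv_vert.
have slack_sum : \sum_j' l j' * (dotv (U i) (W j') + 1) = 0.
  under eq_bigr => j' _ do rewrite mulrDr mulr1.
  by rewrite big_split /= l1 -dotv_sumZr -ey Ty // addNr.
have /eqP := @psumr_eq0P _ _ predT _ (fun j0 _ => slack_ge0 j0) slack_sum j erefl.
by rewrite mulf_eq0 (negbTE ljn) /= addr_eq0 => /eqP.
Qed.

Lemma dotv_delta_e n (q : 'I_n -> nat) (j : 'I_n) y :
  dotv (delta_vert q (lift ord_max j)) y = y 0 j.
Proof.
rewrite /dotv (bigD1 j) //= big1 ?addr0.
  by rewrite mxE lift_max /= (ltn_eqF (ltn_ord j)) eqxx mul1r.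
move=> j' /negbTE nj; rewrite mxE lift_max /= (ltn_eqF (ltn_ord j)).
by rewrite eq_sym (inj_eq val_inj) nj mul0r.
Qed.

Lemma dotv_delta_last n (q : 'I_n -> nat) y :
  dotv (delta_vert q ord_max) y = - \sum_j (q j)%:R * y 0 j.
Proof. by rewrite /dotv -sumrN; apply: eq_bigr => j _; rewrite mxE /= eqxx mulNr. Qed.

Lemma int_mul_eq1_ge2 (a b : int) : 2 <= a -> a * b = 1 -> False.
Proof. by move=> a2 ab; have [b0|b0] := lerP b 0; nia. Qed.

Section DeltaPolar.

Variables (n r : nat) (t : 'rV[rat]_n) (zt : 'I_n -> int).
Hypothesis t_coords : forall j, t 0 j = (zt j)%:~R.

Let U (k : 'I_n.+1) := delta_vert (fun _ : 'I_n => r) k - t.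
Let s := \sum_j zt j.

Lemma dotv_t y : dotv t y = \sum_j (zt j)%:~R * y 0 j.
Proof. by apply: eq_bigr => j _; rewrite t_coords. Qed.

Lemma dotU_e j y : dotv (U (lift ord_max j)) y = y 0 j - dotv t y.
Proof. by rewrite /U dotvBl dotv_delta_e. Qed.

Lemma dotU_last y : dotv (U ord_max) y = - r%:R * \sum_j y 0 j - dotv t y.
Proof. by rewrite /U dotvBl dotv_delta_last mulNr mulr_sumr. Qed.

Lemma tight_e_int (w : 'rV[rat]_n) (zw : 'I_n -> int) j :
  (forall j, w 0 j = (zw j)%:~R) -> dotv (U (lift ord_max j)) w = -1 ->
  zw j = \sum_k zt k * zw k - 1.
Proof.
move=> w_coords; rewrite dotU_e (dotv_int t_coords w_coords) w_coords.
by move=> /eqP; rewrite -intrB -(rmorphN1 intr) => /eqP /intr_inj; lia.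
Qed.

Lemma tight_last_int (w : 'rV[rat]_n) (zw : 'I_n -> int) :
  (forall j, w 0 j = (zw j)%:~R) -> dotv (U ord_max) w = -1 ->
  r%:Z * \sum_j zw j + \sum_j zt j * zw j = 1.
Proof.
move=> w_coords; rewrite dotU_last (dotv_int t_coords w_coords).
have -> : \sum_j w 0 j = (\sum_j zw j)%:~R.
  by rewrite rmorph_sum; apply: eq_bigr => j _; rewrite w_coords.
move=> h; apply: (@intr_inj rat); rewrite intrD intrM /=; move: h.
by rewrite mulNr => /eqP; rewrite -opprD eqr_opp => /eqP ->.
Qed.

Hypothesis polar_lattice : is_lattice_polytope (in_polar U).

Lemma polar_not_lattice_s_neg : s < 0 -> False.
Proof.
move=> s_neg; pose a : rat := 1 - s%:~R.
have sR : (s%:~R : rat) < 0 by rewrite ltrz0.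
have dotv_t1 : dotv t (const_mx (-1)) = - s%:~R.
  rewrite dotv_t rmorph_sum -sumrN; apply: eq_bigr => j _.
  by rewrite mxE mulrN1.
have a_gt0 : 0 < a by rewrite /a; lra.
have U_ge k : - a <= dotv (U k) (const_mx (-1)).
  case: (unliftP ord_max k) => [j ->|->]; first by rewrite dotU_e dotv_t1 mxE /a; lra.
  rewrite dotU_last dotv_t1; under eq_bigr => j _ do rewrite mxE.
  rewrite sumrN sumr_const card_ord /a.
  have : 0 <= r%:R * n%:R :> rat by apply: mulr_ge0.
  by rewrite -mulr_natr; lra.
have U_tight k : k != ord_max -> dotv (U k) (const_mx (-1)) = - a.
  case: (unliftP ord_max k) => [j ->|->]; last by rewrite eqxx.
  by rewrite dotU_e dotv_t1 mxE /a; lra.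
have [Py Ty] := scaled_in_polar a_gt0 U_ge U_tight.
have [w [wL wT]] := tight_lattice_point polar_lattice Py Ty.
have [zw w_coords] := lattice_coords wL.
set P := \sum_j zt j * zw j.
have zw_const j : zw j = P - 1.
  by apply: (tight_e_int w_coords); apply: wT; rewrite eq_sym neq_lift.
have P_eq : P = s * (P - 1).
  by rewrite /P /s mulr_suml; apply: eq_bigr => j _; rewrite zw_const.
by apply: (@int_mul_eq1_ge2 (1 - s) (1 - P)); lia.
Qed.

(* Algebraic core of the case s >= 0: the tight equations for an integral
   point w (with w_j = p - 1 for j <> i, coordinate sum sw, <t, w> = p) force
   c_i * sw = 1. *)
Lemma delta_vertex_identity (ti sw p d : int) :
  sw = n%:Z * (p - 1) + d -> p = s * (p - 1) + ti * d ->
  r%:Z * sw + p = 1 -> ((1 + (n * r)%N%:Z) * ti + r%:Z - r%:Z * s) * sw = 1.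
Proof.
move=> sw_eq p_eq last_eq.
have p1 : p - 1 = - (r%:Z * sw) by lia.
have d_eq : d = (1 + (n * r)%N%:Z) * sw by rewrite PoszM; move: sw_eq; rewrite p1; lia.
rewrite -[RHS]last_eq [in RHS]p_eq p1 d_eq; ring.
Qed.

(* The coefficient c_i = (1 + n r) t_i + r - r s; the point of the polar tight
   on all inequalities except the one for e_i is (c_i)^-1 (K e_i - r 1), with
   K = 1 + n r. *)
Let c (i : 'I_n) : int := (1 + (n * r)%N%:Z) * zt i + r%:Z - r%:Z * s.

Lemma sum_c : \sum_j c j = s + (n * r)%N%:Z.
Proof.
rewrite /c big_split /= big_split /= -mulr_sumr sumrN -mulr_sumr.
by rewrite !sumr_const card_ord !pmulrn !mulrzz -/s PoszM; ring.
Qed.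

(* For s >= 0 and r >= 2 the c_i sum to more than n, so some c_i is >= 2. *)
Lemma exists_c_ge2 : (1 <= n)%N -> (2 <= r)%N -> 0 <= s -> exists i, 2 <= c i.
Proof.
move=> n1 r2 s_ge0; have [i hi|c_small] := pickP (fun i => 2 <= c i).
  by exists i.
have : \sum_j c j <= \sum_(j < n) 1.
  by apply: ler_sum => j _; move: (c_small j) => /= /negbT; rewrite -ltNge; lia.
by rewrite sum_c sumr_const card_ord pmulrn mulrzz mul1r PoszM; nia.
Qed.

Lemma polar_point_off_e i : 0 < c i ->
  exists2 y, in_polar U y & forall k, k != lift ord_max i -> dotv (U k) y = -1.
Proof.
move=> c_gt0; pose C : rat := (c i)%:~R; pose K : rat := 1 + (n * r)%:R.
pose z : 'rV[rat]_n := \row_j ((j == i)%:R * K - r%:R).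
have dotv_tz : dotv t z = K * (zt i)%:~R - r%:R * s%:~R.
  rewrite dotv_t rmorph_sum mulr_sumr; under eq_bigr => j _ do rewrite mxE mulrBr.
  rewrite sumrB (bigD1 i) //= eqxx mul1r big1 ?addr0; last first.
    by move=> j /negbTE ->; rewrite mul0r mulr0.
  by congr (_ - _); [rewrite mulrC | apply: eq_bigr => j _; rewrite mulrC].
have sum_z : \sum_j z 0 j = 1.
  under eq_bigr => j _ do rewrite mxE.
  rewrite sumrB (bigD1 i) //= eqxx mul1r big1 ?addr0; last first.
    by move=> j /negbTE ->; rewrite mul0r.
  by rewrite sumr_const card_ord /K -mulrnA mulnC addrK.
have C_def : C = K * (zt i)%:~R + r%:R - r%:R * s%:~R.
  by rewrite /C /c intrB intrD !intrM intrD.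
have dotUz k : dotv (U k) z = - C + (k == lift ord_max i)%:R * K.
  case: (unliftP ord_max k) => [j ->|->].
    rewrite dotU_e dotv_tz mxE C_def (inj_eq (@lift_inj _ ord_max)); ring.
  by rewrite dotU_last sum_z dotv_tz C_def (negbTE (neq_lift _ _)) mul0r; ring.
have C_gt0 : 0 < C by rewrite /C ltr0z.
have U_ge k : - C <= dotv (U k) z.
  rewrite dotUz lerDl; apply: mulr_ge0; first by case: (_ == _).
  by rewrite /K addr_ge0.
have U_tight k : k != lift ord_max i -> dotv (U k) z = - C.
  by move/negbTE; rewrite dotUz => ->; rewrite mul0r addr0.
by have [Py Ty] := scaled_in_polar C_gt0 U_ge U_tight; exists (C^-1 *: z).
Qed.

Lemma tight_off_e_int i (w : 'rV[rat]_n) (zw : 'I_n -> int) :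
  (forall j, w 0 j = (zw j)%:~R) ->
  (forall k, k != lift ord_max i -> dotv (U k) w = -1) ->
  c i * \sum_j zw j = 1.
Proof.
move=> w_coords wT; set P := \sum_j zt j * zw j.
have zw_off j : zw j = (P - 1) + (j == i)%:R * (zw i - (P - 1)).
  have [->|ji] := eqVneq j i; first by rewrite mul1r addrC subrK.
  rewrite mul0r addr0; apply: (tight_e_int w_coords); apply: wT.
  by rewrite (inj_eq (@lift_inj _ ord_max)).
have sum_off (f : 'I_n -> int) :
    \sum_j f j * zw j = (\sum_j f j) * (P - 1) + f i * (zw i - (P - 1)).
  under eq_bigr => j _ do rewrite zw_off mulrDr mulrCA.
  rewrite big_split /= -mulr_suml; congr (_ + _).
  rewrite (bigD1 i) //= eqxx mul1r big1 ?addr0 // => j /negbTE ->.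
  by rewrite mul0r.
have last_tight := tight_last_int w_coords (wT _ (neq_lift _ _)).
apply: (delta_vertex_identity _ (sum_off _) last_tight).
have := sum_off (fun _ => 1); rewrite sumr_const card_ord.
by under eq_bigr => j _ do rewrite mul1r; rewrite mul1r natz.
Qed.

Lemma polar_not_lattice_s_nonneg : (1 <= n)%N -> (2 <= r)%N -> 0 <= s -> False.
Proof.
move=> n1 r2 s_ge0; have [i ci] := exists_c_ge2 n1 r2 s_ge0.
have c_gt0 : 0 < c i by lia.
have [y Py Ty] := polar_point_off_e c_gt0.
have [w [wL wT]] := tight_lattice_point polar_lattice Py Ty.
have [zw w_coords] := lattice_coords wL.
exact: int_mul_eq1_ge2 ci (tight_off_e_int w_coords wT).
Qed.

End DeltaPolar.

Lemma delta_const_not_reflexive n r : (1 <= n)%N -> (2 <= r)%N ->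
  reflexive_polytope (delta_vert (fun _ : 'I_n => r)) -> False.
Proof.
move=> n1 r2 [t [tL [_ polar_lattice]]].
have [zt t_coords] := lattice_coords tL.
have [s_neg|s_ge0] := ltrP (\sum_j zt j) 0.
- exact: polar_not_lattice_s_neg t_coords polar_lattice s_neg.
- exact: polar_not_lattice_s_nonneg t_coords polar_lattice n1 r2 s_ge0.
Qed.

Theorem proposition3p4 (x1 r1 : nat) :
  (1 <= x1)%N -> (1 <= r1)%N ->
  reflexive_polytope (delta_vert (fun _ : 'I_x1 => r1)) ->
  IDP (delta_vert (fun _ : 'I_x1 => r1)) ->
  r1 = 1%N.
Proof.
move=> x1_ge1 r1_ge1 refl _.
have [r1_ge2|r1_le1] := ltnP 1 r1; last by apply/eqP; rewrite eqn_leq r1_le1.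
by case: (delta_const_not_reflexive x1_ge1 r1_ge2 refl).
Qed.
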